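(* EpochPOP, as described in the context, is free from use-after-free errors: no node freed by a reclaiming thread is subsequently accessed by any thread.
   Context: Setting: an asynchronous shared-memory system with a fixed set of threads operating on a linked concurrent data structure; each unlinked node is retired by exactly one thread. EpochPOP: there is a shared monotonically increasing global epoch (incremented periodically at operation starts) and a shared array reservedEpoch with one slot per thread. At the start of each operation a thread writes the current global epoch into its reservedEpoch slot; at the end it writes a maximal value MAX and clears its local reservations. During an operation, nodes are accessed only through a read(ptrAddr, slot) call that repeatedly loads the pointer at ptrAddr, stores it in a private local reservation slot (no fence, not published), and re-loads until the loads agree (hazard-pointer style usage, so that a returned node was not retired at the time of validation). Each thread also has a row of a shared reservation array and a shared counter publishCounter. On retire, a thread records the current global epoch as the node's retire epoch and appends it to its retire list; periodically it frees every node in its retire list whose retire epoch is smaller than the minimum value in reservedEpoch; if afterwards the retire list is still at least a fixed multiple of the threshold, it records all publishCounters, sends a POSIX signal to every other thread (whose handler copies its local reservations into its shared slots and increments its publishCounter), waits until all other publishCounters have increased, and frees every node of its retire list not among the published reservations. Assumption: after being signalled, a thread publishes its reservations within bounded time. *)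

From mathcomp Require Import all_boot.

Set Implicit Arguments.
Unset Strict Implicit.
Unset Printing Implicit Defensive.

(* Nodes are abstract identifiers (a node is never re-identified after free). *)
Definition Node := nat.

(* A pointer location: [(None, k)] is the k-th root pointer of the data
   structure, [(Some n, k)] is the k-th pointer field of node [n]. *)
Definition Addr := (option Node * nat)%type.

Inductive Resv := RE of nat | RMax.

Definition lt_resv (e : nat) (r : Resv) : bool :=
  match r with RE x => e < x | RMax => true end.

(* Reclamation phase of a thread: idle, or waiting for the publish counters
   of the other threads to exceed the recorded values [rec]. *)
Inductive Phase (N : nat) := Idle | Waiting of ('I_N -> nat).
Arguments Idle {N}.

Definition upd (A : eqType) (B : Type) (f : A -> B) (x : A) (v : B) : A -> B :=
  fun y => if y == x then v else f y.

Record state (N K : nat) := mkState {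
  gEpoch         : nat;
  reservedEpoch  : 'I_N -> Resv;
  active         : 'I_N -> bool;
  localRes       : 'I_N -> 'I_K -> option Node;
  pendRead       : 'I_N -> option ('I_K * Addr); (* read(ptrAddr, slot) in progress *)
  retireList     : 'I_N -> seq (Node * nat);     (* retire list: (node, retire epoch) *)
  phase          : 'I_N -> Phase N;
  sigPending     : 'I_N -> bool;
  publishedRes   : 'I_N -> 'I_K -> option Node;
  publishCounter : 'I_N -> nat;
  mem            : Addr -> option Node;
  ghostRetired   : seq Node;
  ghostFreed     : seq Node
}.

Definition init_state (N K : nat) (m0 : Addr -> option Node) : state N K :=
  {| gEpoch := 0; reservedEpoch := fun _ => RMax; active := fun _ => false;
     localRes := fun _ _ => None; pendRead := fun _ => None;
     retireList := fun _ => [::]; phase := fun _ => Idle;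
     sigPending := fun _ => false; publishedRes := fun _ _ => None;
     publishCounter := fun _ => 0; mem := m0;
     ghostRetired := [::]; ghostFreed := [::] |}.

Section Model.
Variables (N K : nat).
(* The reclamation trigger: signal-based reclamation is only started when the
   retire list has at least [mult * threshold] entries. *)
Variables (mult threshold : nat).

Inductive label :=
| LOpStart of 'I_N & bool          (* bool: increment the global epoch first *)
| LOpEnd of 'I_N
| LReadStart of 'I_N & 'I_K & Addr (* load ptrAddr and store into the slot *)
| LReadValidate of 'I_N & Addr     (* re-load ptrAddr and compare *)
| LWrite of 'I_N & Addr & option Node
| LDeref of 'I_N & Node            (* any other access to a node *)
| LRetire of 'I_N & Node
| LEpochReclaim of 'I_N
| LSignalStart of 'I_N
| LHandler of 'I_N
| LSignalFree of 'I_N.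

Definition accessed (l : label) : option Node :=
  match l with
  | LReadStart _ _ a => a.1
  | LReadValidate _ a => a.1
  | LWrite _ a _ => a.1
  | LDeref _ n => Some n
  | _ => None
  end.

Definition holds_except (s : state N K) (t : 'I_N) (i : option 'I_K) (n : Node) : Prop :=
  exists j : 'I_K, Some j != i /\ localRes s t j = Some n.

(* [a] may be dereferenced by [t]: a root, or a field of a node that [t]
   holds in a (validated) local reservation slot. *)
Definition addr_ok (s : state N K) (t : 'I_N) (i : option 'I_K) (a : Addr) : Prop :=
  match a.1 with None => True | Some n => holds_except s t i n end.

Definition ready (s : state N K) (t : 'I_N) : Prop :=
  pendRead s t = None /\ phase s t = Idle.

Definition epoch_freeable (s : state N K) (e : nat) : bool :=
  [forall u, lt_resv e (reservedEpoch s u)].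

Definition signal_freeable (s : state N K) (t : 'I_N) (n : Node) : bool :=
  [forall u, (u != t) ==> [forall j, publishedRes s u j != Some n]] &&
  [forall j, localRes s t j != Some n].

Inductive step : state N K -> label -> state N K -> Prop :=
| StOpStart s t (inc : bool) :
    ~~ active s t -> ready s t ->
    let e := gEpoch s + inc in
    step s (LOpStart t inc)
      {| gEpoch := e; reservedEpoch := upd (reservedEpoch s) t (RE e);
         active := upd (active s) t true; localRes := localRes s;
         pendRead := pendRead s; retireList := retireList s; phase := phase s;
         sigPending := sigPending s; publishedRes := publishedRes s;
         publishCounter := publishCounter s; mem := mem s;
         ghostRetired := ghostRetired s; ghostFreed := ghostFreed s |}
| StOpEnd s t :
    active s t -> ready s t ->
    step s (LOpEnd t)
      {| gEpoch := gEpoch s; reservedEpoch := upd (reservedEpoch s) t RMax;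
         active := upd (active s) t false;
         localRes := upd (localRes s) t (fun _ => None);
         pendRead := pendRead s; retireList := retireList s; phase := phase s;
         sigPending := sigPending s; publishedRes := publishedRes s;
         publishCounter := publishCounter s; mem := mem s;
         ghostRetired := ghostRetired s; ghostFreed := ghostFreed s |}
| StReadStart s t (i : 'I_K) a :
    active s t -> ready s t -> addr_ok s t None a ->
    step s (LReadStart t i a)
      {| gEpoch := gEpoch s; reservedEpoch := reservedEpoch s;
         active := active s;
         localRes := upd (localRes s) t (upd (localRes s t) i (mem s a));
         pendRead := upd (pendRead s) t (Some (i, a));
         retireList := retireList s; phase := phase s;
         sigPending := sigPending s; publishedRes := publishedRes s;
         publishCounter := publishCounter s; mem := mem s;
         ghostRetired := ghostRetired s; ghostFreed := ghostFreed s |}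
| StReadValidate s t (i : 'I_K) a :
    pendRead s t = Some (i, a) -> addr_ok s t (Some i) a ->
    let ok := mem s a == localRes s t i in
    step s (LReadValidate t a)
      {| gEpoch := gEpoch s; reservedEpoch := reservedEpoch s;
         active := active s;
         localRes := if ok then localRes s
                     else upd (localRes s) t (upd (localRes s t) i (mem s a));
         pendRead := if ok then upd (pendRead s) t None else pendRead s;
         retireList := retireList s; phase := phase s;
         sigPending := sigPending s; publishedRes := publishedRes s;
         publishCounter := publishCounter s; mem := mem s;
         ghostRetired := ghostRetired s; ghostFreed := ghostFreed s |}
| StWrite s t a v :
    active s t -> ready s t -> addr_ok s t None a ->
    step s (LWrite t a v)
      {| gEpoch := gEpoch s; reservedEpoch := reservedEpoch s;
         active := active s; localRes := localRes s;
         pendRead := pendRead s; retireList := retireList s; phase := phase s;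
         sigPending := sigPending s; publishedRes := publishedRes s;
         publishCounter := publishCounter s; mem := upd (mem s) a v;
         ghostRetired := ghostRetired s; ghostFreed := ghostFreed s |}
| StDeref s t n :
    active s t -> ready s t -> holds_except s t None n ->
    step s (LDeref t n) s
| StRetire s t n :
    active s t -> ready s t ->
    step s (LRetire t n)
      {| gEpoch := gEpoch s; reservedEpoch := reservedEpoch s;
         active := active s; localRes := localRes s;
         pendRead := pendRead s;
         retireList := upd (retireList s) t (rcons (retireList s t) (n, gEpoch s));
         phase := phase s;
         sigPending := sigPending s; publishedRes := publishedRes s;
         publishCounter := publishCounter s; mem := mem s;
         ghostRetired := n :: ghostRetired s; ghostFreed := ghostFreed s |}
| StEpochReclaim s t :
    ready s t ->
    let L := retireList s t in
    let fr := fun p : Node * nat => epoch_freeable s p.2 in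
    step s (LEpochReclaim t)
      {| gEpoch := gEpoch s; reservedEpoch := reservedEpoch s;
         active := active s; localRes := localRes s;
         pendRead := pendRead s;
         retireList := upd (retireList s) t [seq p <- L | ~~ fr p];
         phase := phase s;
         sigPending := sigPending s; publishedRes := publishedRes s;
         publishCounter := publishCounter s; mem := mem s;
         ghostRetired := ghostRetired s;
         ghostFreed := [seq p.1 | p <- L & fr p] ++ ghostFreed s |}
| StSignalStart s t :
    ready s t -> mult * threshold <= size (retireList s t) ->
    step s (LSignalStart t)
      {| gEpoch := gEpoch s; reservedEpoch := reservedEpoch s;
         active := active s; localRes := localRes s;
         pendRead := pendRead s; retireList := retireList s;
         phase := upd (phase s) t (Waiting (publishCounter s));
         sigPending := fun u => if u == t then sigPending s u else true;
         publishedRes := publishedRes s;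
         publishCounter := publishCounter s; mem := mem s;
         ghostRetired := ghostRetired s; ghostFreed := ghostFreed s |}
| StHandler s t :
    sigPending s t ->
    step s (LHandler t)
      {| gEpoch := gEpoch s; reservedEpoch := reservedEpoch s;
         active := active s; localRes := localRes s;
         pendRead := pendRead s; retireList := retireList s;
         phase := phase s;
         sigPending := upd (sigPending s) t false;
         publishedRes := upd (publishedRes s) t (localRes s t);
         publishCounter := upd (publishCounter s) t (publishCounter s t).+1;
         mem := mem s;
         ghostRetired := ghostRetired s; ghostFreed := ghostFreed s |}
| StSignalFree s t rec :
    phase s t = Waiting rec ->
    (forall u, u != t -> rec u < publishCounter s u) ->
    let L := retireList s t in
    let fr := fun p : Node * nat => signal_freeable s t p.1 in
    step s (LSignalFree t)
      {| gEpoch := gEpoch s; reservedEpoch := reservedEpoch s;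
         active := active s; localRes := localRes s;
         pendRead := pendRead s;
         retireList := upd (retireList s) t [seq p <- L | ~~ fr p];
         phase := upd (phase s) t Idle;
         sigPending := sigPending s; publishedRes := publishedRes s;
         publishCounter := publishCounter s; mem := mem s;
         ghostRetired := ghostRetired s;
         ghostFreed := [seq p.1 | p <- L & fr p] ++ ghostFreed s |}.

(* Usage assumptions of the data structure on a step taken from [s]:
   - each node is retired (by exactly one thread) at most once;
   - hazard-pointer style usage: when a read validates successfully and
     returns a node, that node has not been retired at validation time. *)
Definition usage_ok (s : state N K) (l : label) : Prop :=
  match l with
  | LRetire _ n => n \notin ghostRetired s
  | LReadValidate t a =>
      forall (i : 'I_K) (n : Node),
        pendRead s t = Some (i, a) -> mem s a = localRes s t i ->
        mem s a = Some n -> n \notin ghostRetired s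
  | _ => True
  end.

Inductive reachable (m0 : Addr -> option Node) : state N K -> Prop :=
| ReachInit : reachable m0 (init_state N K m0)
| ReachStep s l s' : reachable m0 s -> step s l s' -> usage_ok s l ->
    reachable m0 s'.

End Model.

From Pilot Require Import Defs.
From mathcomp Require Import all_boot.

Set Implicit Arguments.
Unset Strict Implicit.
Unset Printing Implicit Defensive.

(* Every access goes through a
   protecting slot, so it suffices that protected nodes are never freed.  A
   slot starts protecting a node only at a successful validation, when the node
   is not yet retired; hence the node is retired while [t] is active, and [t]'s
   announced epoch is at most the retire epoch, which rules out epoch-based
   freeing.  For signal-based freeing, the handler of [t] ran after the
   reclaimer's signal and published the slot, which cannot have changed since
   without ceasing to protect a node of the reclaimer's retire list. *)

Lemma mem_upd_filter (A T : eqType) (f : A -> seq T) a (P : pred T) b x :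
  x \in upd f a [seq y <- f a | P y] b -> x \in f b.
Proof. by rewrite /upd; case: eqP => [-> | //]; rewrite mem_filter => /andP[]. Qed.

Lemma mem_reclaimed (A B : eqType) (L : seq (A * B)) (P : pred (A * B)) F x :
  x \in [seq p.1 | p <- L & P p] ++ F ->
  x \in F \/ exists2 y, (x, y) \in L & P (x, y).
Proof.
rewrite mem_cat => /orP[/mapP[[x' y]] | ]; last by left.
by rewrite mem_filter => /andP[P_xy xy_in] /= ->; right; exists y.
Qed.

Section Safety.
Variables (N K mult threshold : nat).
Implicit Types (s : state N K) (t r u : 'I_N) (j : 'I_K) (n : Node).
Local Notation step := (Defs.step mult threshold).

Definition slot_validated s t j : bool :=
  if pendRead s t is Some (i, _) then i != j else true.

Definition protects s t j n : Prop :=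
  localRes s t j = Some n /\ slot_validated s t j.

Definition reads_active s := forall t p, pendRead s t = Some p -> active s t.

Definition reservations_active s :=
  forall t j n, localRes s t j = Some n -> active s t.

Definition active_announced s :=
  forall t, active s t -> exists2 x, reservedEpoch s t = RE x & x <= gEpoch s.

Definition retire_lists_retired s :=
  forall r p, p \in retireList s r -> p.1 \in ghostRetired s.

Definition freed_retired s := {subset ghostFreed s <= ghostRetired s}.

Definition epochs_cover_protected s :=
  forall t j n r e, protects s t j n -> (n, e) \in retireList s r ->
  exists2 x, reservedEpoch s t = RE x & x <= e.

Definition published_protected s :=
  forall r rec u j n e, phase s r = Waiting rec -> u != r ->
  rec u < publishCounter s u -> protects s u j n -> (n, e) \in retireList s r ->
  publishedRes s u j = Some n.

Definition protected_not_freed s :=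
  forall t j n, protects s t j n -> n \notin ghostFreed s.

Lemma protects_step s l s' t j n :
  step s l s' -> usage_ok s l -> protects s' t j n ->
  protects s t j n \/ n \notin ghostRetired s'.
Proof.
case=> {l s'} {}s; try by left.
- move=> u _ _ _; rewrite /protects /= /upd; case: eqP => _; [by case | by left].
- move=> u i a _ [rdy _] _ _; rewrite /protects /slot_validated /= /upd.
  case: eqP => [-> | _]; last by left.
  rewrite rdy; case: eqP => [-> [_] | _ [? _]]; [by rewrite eqxx | by left].
- move=> u i a pend _ ok fresh; rewrite /ok /protects /slot_validated /= /upd.
  case: eqP => [valid | _]; case: eqP => [-> | _]; rewrite ?pend; try by left.
    have [<- [res _] | ij [res _]] := eqVneq i j; last by left.
    by right; apply: (fresh i n pend valid); rewrite valid.
  by case: eqP => [-> [_] | _ [? ?]]; [rewrite eqxx | left].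
Qed.

Lemma reads_active_step s l s' : reads_active s -> step s l s' -> reads_active s'.
Proof.
move=> H st; case: st H => {l s'} {}s; try done.
- move=> u inc _ _ e H t p /H /=; rewrite /upd; by case: eqP.
- move=> u _ [rdy _] H t p /=; rewrite /upd; case: eqP => [-> | _ /H //]; by rewrite rdy.
- move=> u i a act _ _ H t p /=; rewrite /upd; case: eqP => [-> | _ /H //] _; exact: act.
- move=> u i a _ _ ok H t p /=; case: ifP => _; rewrite /upd; [case: eqP => // _|]; exact: H.
Qed.

Lemma reservations_active_step s l s' :
  reads_active s -> reservations_active s -> step s l s' -> reservations_active s'.
Proof.
move=> reads H st; case: st reads H => {l s'} {}s; try done.
- move=> u inc _ _ e _ H t j n /H /=; rewrite /upd; by case: eqP.
- move=> u _ _ _ H t j n /=; rewrite /upd; case: eqP => // _; exact: H.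
- move=> u i a act _ _ _ H t j n /=; rewrite /upd; case: eqP => [-> // | _]; exact: H.
- move=> u i a pend _ ok reads H t j n /=; case: ifP => _; first exact: H.
  rewrite /upd; case: eqP => [-> _ | _]; [exact: reads pend | exact: H].
Qed.

Lemma active_announced_step s l s' :
  active_announced s -> step s l s' -> active_announced s'.
Proof.
move=> H st; case: st H => {l s'} {}s; try done.
- move=> u inc _ _ e H t /=; rewrite /upd; case: eqP => [_ _ | _ /H[x -> le_x]].
    by exists e.
  by exists x => //; rewrite (leq_trans le_x) ?leq_addr.
- move=> u _ _ H t /=; rewrite /upd; case: eqP => // _; exact: H.
Qed.

Lemma retire_lists_retired_step s l s' :
  retire_lists_retired s -> step s l s' -> retire_lists_retired s'.
Proof.
move=> H st; case: st H => {l s'} {}s; try done.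
- move=> u n _ _ H r p /=; rewrite in_cons /upd.
  case: (r =P u) => [_ | _ /H ->]; last by rewrite orbT.
  by rewrite mem_rcons in_cons => /orP[/eqP -> | /H ->]; rewrite ?eqxx ?orbT.
- by move=> u _ L fr H r p /mem_upd_filter /H.
- by move=> u rec _ _ L fr H r p /mem_upd_filter /H.
Qed.

Lemma freed_retired_step s l s' :
  retire_lists_retired s -> freed_retired s -> step s l s' -> freed_retired s'.
Proof.
move=> rl H st; case: st rl H => {l s'} {}s; try done.
- by move=> u n _ _ _ H m /H; rewrite in_cons orbC => ->.
- by move=> u _ L fr rl H n /mem_reclaimed[/H | [e /rl]].
- by move=> u rec _ _ L fr rl H n /mem_reclaimed[/H | [e /rl]].
Qed.

Lemma epochs_cover_protected_step s l s' :
  reservations_active s -> active_announced s -> retire_lists_retired s' ->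
  epochs_cover_protected s -> step s l s' -> usage_ok s l ->
  epochs_cover_protected s'.
Proof.
move=> res ann rl' H st U t j n r e prot' in'.
have [prot | fresh] := protects_step st U prot'; last by move: (rl' r _ in') fresh => /= ->.
have act := res t j n prot.1.
case: st U act ann H prot prot' in' {res rl'} => {l s'} {}s; try by move=> *; eauto.
- move=> u inc nact _ e' _ act _ H prot _ /= in'; rewrite /upd.
  case: eqP => [tu | _]; [by move: nact; rewrite -tu act | exact: H prot in'].
- move=> u _ _ _ act _ H prot [] /=; rewrite /upd.
  case: eqP => // _ _ _ in'; exact: H prot in'.
- move=> u m _ _ _ act ann H prot _ /=; rewrite /upd.
  case: (r =P u) => [_ | _ /(H _ _ _ _ _ prot) //].
  rewrite mem_rcons in_cons => /orP[/eqP[_ ->] | /(H _ _ _ _ _ prot) //]; exact: ann.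
- by move=> u _ L fr _ _ _ H prot _ /mem_upd_filter /(H _ _ _ _ _ prot).
- by move=> u rec _ _ L fr _ _ _ H prot _ /mem_upd_filter /(H _ _ _ _ _ prot).
Qed.

Lemma published_protected_step s l s' :
  retire_lists_retired s' -> published_protected s -> step s l s' -> usage_ok s l ->
  published_protected s'.
Proof.
move=> rl' H st U r rec u j n e ph ur cnt prot' in'.
have [prot | fresh] := protects_step st U prot'; last by move: (rl' r _ in') fresh => /= ->.
case: st U H prot ph cnt in' {rl' prot'} => {l s'} {}s; try by move=> *; eauto.
- move=> v m _ [_ idle] _ H prot ph cnt /=; rewrite /upd.
  case: (r =P v) => [rv | _]; [by move: ph; rewrite rv idle | exact: H ph ur cnt prot].
- by move=> v _ L fr _ H prot ph cnt /mem_upd_filter; apply: H ph ur cnt prot.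
- move=> v _ _ _ H prot /=; rewrite /upd.
  case: eqP => [_ [<-] | _ ph cnt]; [by rewrite ltnn | exact: H ph ur cnt prot].
- move=> v _ _ H prot ph /=; rewrite /upd.
  case: eqP => [<- _ _ | _ cnt in']; [exact: prot.1 | exact: H ph ur cnt prot in'].
- move=> v rec' _ _ L fr _ H prot /=; rewrite /upd.
  by case: (r =P v) => // _ ph cnt; apply: H ph ur cnt prot.
Qed.

Lemma epoch_freeable_protected s t j n r e :
  epochs_cover_protected s -> protects s t j n -> (n, e) \in retireList s r ->
  ~~ epoch_freeable s e.
Proof.
move=> H prot /(H _ _ _ _ _ prot)[x res le_xe].
by apply/forallP => /(_ t); rewrite res /= ltnNge le_xe.
Qed.

Lemma signal_freeable_protected s r rec t j n e :
  published_protected s -> phase s r = Waiting rec ->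
  (forall u, u != r -> rec u < publishCounter s u) ->
  protects s t j n -> (n, e) \in retireList s r -> ~~ signal_freeable s r n.
Proof.
move=> H ph cnt prot in_r; apply/andP => -[/forallP others /forallP own].
have [tr | tr] := eqVneq t r; first by move: (own j); rewrite -tr prot.1 eqxx.
move: (others t); rewrite tr => /forallP /(_ j).
by rewrite (H _ _ _ _ _ _ ph tr (cnt _ tr) prot in_r) eqxx.
Qed.

Lemma protected_not_freed_step s l s' :
  freed_retired s' -> epochs_cover_protected s -> published_protected s ->
  protected_not_freed s -> step s l s' -> usage_ok s l -> protected_not_freed s'.
Proof.
move=> fr' cover pub H st U t j n prot'.
have [prot | fresh] := protects_step st U prot'; last by apply: contra fresh; exact: fr'.
case: st U cover pub H prot {fr' prot'} => {l s'} {}s; try by move=> *; eauto.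
- move=> u _ L fr _ cover _ H prot /=; apply/negP.
  case/mem_reclaimed => [|[e in_L]]; apply/negP; first exact: H prot.
  exact: epoch_freeable_protected cover prot in_L.
- move=> r rec ph cnt L fr _ _ pub H prot /=; apply/negP.
  case/mem_reclaimed => [|[e in_L]]; apply/negP; first exact: H prot.
  exact: signal_freeable_protected pub ph cnt prot in_L.
Qed.

Record invariant s : Prop := Invariant {
  inv_reads_active : reads_active s;
  inv_reservations_active : reservations_active s;
  inv_active_announced : active_announced s;
  inv_retire_lists_retired : retire_lists_retired s;
  inv_freed_retired : freed_retired s;
  inv_epochs_cover_protected : epochs_cover_protected s;
  inv_published_protected : published_protected s;
  inv_protected_not_freed : protected_not_freed s }.

Lemma invariant_init m0 : invariant (init_state N K m0).
Proof. by []. Qed.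

Lemma invariant_step s l s' :
  invariant s -> step s l s' -> usage_ok s l -> invariant s'.
Proof.
case=> reads res ann rl fr cover pub safe st U.
have rl' := retire_lists_retired_step rl st.
have fr' := freed_retired_step rl fr st.
split=> //.
- exact: reads_active_step reads st.
- exact: reservations_active_step reads res st.
- exact: active_announced_step ann st.
- exact: epochs_cover_protected_step res ann rl' cover st U.
- exact: published_protected_step rl' pub st U.
- exact: protected_not_freed_step fr' cover pub safe st U.
Qed.

Lemma reachable_invariant m0 s : reachable mult threshold m0 s -> invariant s.
Proof.
elim=> [|s0 l s1 _ IH st U]; [exact: invariant_init | exact: invariant_step IH st U].
Qed.

Lemma holds_except_protects s t n :
  holds_except s t (omap fst (pendRead s t)) n -> exists j, protects s t j n.
Proof.
case=> j [ne res]; exists j; split=> //; rewrite /slot_validated.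
by case: (pendRead s t) ne => [[i a]|] //=; rewrite eq_sym.
Qed.

Lemma addr_ok_protects s t i a n :
  omap fst (pendRead s t) = i -> addr_ok s t i a -> a.1 = Some n ->
  exists j, protects s t j n.
Proof.
by move=> <-; rewrite /addr_ok; case: a.1 => // m held [<-]; apply: holds_except_protects.
Qed.

Lemma accessed_protected s l s' n :
  step s l s' -> accessed l = Some n -> exists t j, protects s t j n.
Proof.
case=> {l s'} {}s //=.
- move=> t i a _ [rdy _] ok_a acc; exists t.
  by apply: addr_ok_protects ok_a acc; rewrite rdy.
- move=> t i a pend ok_a acc; exists t.
  by apply: addr_ok_protects ok_a acc; rewrite pend.
- move=> t a _ _ [rdy _] ok_a acc; exists t.
  by apply: addr_ok_protects ok_a acc; rewrite rdy.
- move=> t m _ [rdy _] held [<-]; exists t.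
  by apply: holds_except_protects; rewrite rdy.
Qed.

End Safety.

Theorem mainTheorem10 (N K mult threshold : nat) (m0 : Addr -> option Node)
    (s : state N K) (l : label N K) (s' : state N K) (n : Node) :
  reachable mult threshold m0 s ->
  step mult threshold s l s' ->
  usage_ok s l ->
  accessed l = Some n ->
  n \notin ghostFreed s.
Proof.
move=> reach st _ acc.
have [t [j prot]] := accessed_protected st acc.
exact: (inv_protected_not_freed (reachable_invariant reach)) t j n prot.
Qed.
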